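(* For arbitrary $\sigma\ge0$, $\theta\ge0$ and $\omega\ge0$, the second order differential operator $\sigma+\Delta_{\theta,\omega}$ maps $\mathcal P^+$ into itself.
   Context: $D=d/dz$, $\Delta_{\theta,\omega}=(\theta+\omega z)D+zD^2$. $\mathcal P^+$ is the set of complex polynomials of the form $C\prod_{j=1}^m(z+\pi_j)$ with $C\in\mathbb C$, $m\in\mathbb N_0$, $\pi_j\ge0$ (polynomials all of whose zeros are real and nonpositive, including constants). *)

From mathcomp Require Import all_boot all_order all_algebra.
From mathcomp Require Import complex.
From mathcomp Require Import reals.
Set Implicit Arguments. Unset Strict Implicit. Unset Printing Implicit Defensive.
Import Order.TTheory GRing.Theory Num.Theory.
Local Open Scope ring_scope.
Local Open Scope complex_scope.

Definition Pplus (R : realType) (p : {poly R[i]}) : Prop :=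
  exists (c : R[i]) (s : seq R),
    (forall x, x \in s -> 0 <= x) /\
    p = c *: \prod_(x <- s) ('X + (x%:C)%:P).

Definition Delta (R : realType) (theta omega : R) (f : {poly R[i]}) : {poly R[i]} :=
  ((theta%:C)%:P + (omega%:C)%:P * 'X) * f^`() + 'X * f^`(2).

Definition sigmaDelta (R : realType) (sigma theta omega : R) (f : {poly R[i]}) : {poly R[i]} :=
  (sigma%:C) *: f + Delta theta omega f.

From mathcomp Require Import all_boot all_order all_algebra.
From mathcomp Require Import complex reals ring.
Set Implicit Arguments. Unset Strict Implicit. Unset Printing Implicit Defensive.
Import Order.TTheory GRing.Theory Num.Theory.
Local Open Scope complex_scope.
Local Open Scope ring_scope.

(* It suffices to treat F = prod_j (z + x_j) with x_j >= 0.  Let w be a root of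
   g = (sigma + Delta_{theta,omega}) F that is not a nonpositive real (in the
   order of R[i], [w <= 0] says exactly that w is a nonpositive real).  The
   logarithmic derivative gives F'(w) = F(w) L_s(w) with L_s(w) = sum_j 1/(w + x_j),
   which is nonzero, so the roots of F' are nonpositive reals as well and
   F' = d prod_k (z + y_k).  Then
     g(w) = F'(w) (sigma / L_s(w) + theta + omega w + w L_t(w)),
   and every summand of the bracket is a nonnegative combination of 1 and w.
   Since w is not a nonpositive real, such combinations add up to 0 only if all
   of them vanish, which forces sigma = theta = omega = 0 and F' constant, hence
   g = 0.  So every root of g is a nonpositive real, i.e. g is in P^+. *)

Section ConvexCone.

Variables (R : rcfType) (w : R[i]).

Definition cone (z : R[i]) : Prop :=
  exists a b, [/\ 0 <= a, 0 <= b & z = a + b * w].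

Lemma cone_ge0 c : 0 <= c -> cone c.
Proof. by move=> c0; exists c, 0; rewrite mul0r addr0. Qed.

Lemma cone_id : cone w.
Proof. by exists 0, 1; rewrite add0r mul1r. Qed.

Lemma coneD z1 z2 : cone z1 -> cone z2 -> cone (z1 + z2).
Proof.
move=> [a1 [b1 [a10 b10 ->]]] [a2 [b2 [a20 b20 ->]]].
by exists (a1 + a2), (b1 + b2); split; rewrite ?addr_ge0 // mulrDl addrACA.
Qed.

Lemma coneM c z : 0 <= c -> cone z -> cone (c * z).
Proof.
move=> c0 [a [b [a0 b0 ->]]]; exists (c * a), (c * b).
by split; rewrite ?mulr_ge0 // mulrDr mulrA.
Qed.

Lemma cone_sum (I : eqType) (r : seq I) (F : I -> R[i]) :
  (forall i, i \in r -> cone (F i)) -> cone (\sum_(i <- r) F i).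
Proof.
elim: r => [|i r IHr] Fc; first by rewrite big_nil; apply: cone_ge0.
rewrite big_cons; apply: coneD; first by apply: Fc; rewrite mem_head.
by apply: IHr => j rj; apply: Fc; rewrite inE rj orbT.
Qed.

Lemma cone_inv z : cone z^* -> cone z^-1.
Proof. by move=> zc; rewrite invC_norm; apply: coneM; rewrite ?invr_ge0 ?exprn_ge0. Qed.

Lemma cone_conj_inv z : cone z -> cone (z^-1)^*.
Proof. by move=> zc; rewrite fmorphV; apply: cone_inv; rewrite conjCK. Qed.

Hypothesis w_off : ~~ (w <= 0).

Lemma cone_pointed a b : 0 <= a -> 0 <= b -> a + b * w = 0 -> a = 0 /\ b = 0.
Proof.
move=> a0 b0 abw0; have [b_eq0|b_neq0] := eqVneq b 0.
  by move: abw0; rewrite b_eq0 mul0r addr0.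
have bw : b * w = - a by apply/eqP; rewrite -addr_eq0 addrC abw0.
move: w_off; rewrite -[w](mulKf b_neq0) bw mulrN oppr_le0.
by rewrite mulr_ge0 ?invr_ge0.
Qed.

Lemma cone_add_eq0 z1 z2 : cone z1 -> cone z2 -> z1 + z2 = 0 -> z1 = 0 /\ z2 = 0.
Proof.
move=> [a1 [b1 [a10 b10 ->]]] [a2 [b2 [a20 b20 ->]]].
rewrite addrACA -mulrDl => /cone_pointed [||/eqP a_eq0 /eqP b_eq0]; rewrite ?addr_ge0 //.
move: a_eq0 b_eq0; rewrite !paddr_eq0 // => /andP[/eqP-> /eqP->] /andP[/eqP-> /eqP->].
by rewrite mul0r addr0.
Qed.

Lemma cone_sum_neq0 (I : eqType) (r : seq I) (F : I -> R[i]) :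
  r != [::] -> (forall i, i \in r -> cone (F i) /\ F i != 0) ->
  \sum_(i <- r) F i != 0.
Proof.
case: r => // i r _ FcF; rewrite big_cons.
have [Fic Fi0] := FcF i (mem_head i r).
have rc : cone (\sum_(j <- r) F j).
  by apply: cone_sum => j rj; have [] := FcF j; rewrite // inE rj orbT.
by apply: contra Fi0 => /eqP /(cone_add_eq0 Fic rc) [->].
Qed.

End ConvexCone.

Section OffTheRay.

Variables (R : rcfType) (w : R[i]).
Hypothesis w_off : ~~ (w <= 0).

Definition logderiv (s : seq R) (z : R[i]) : R[i] := \sum_(x <- s) (z + x%:C)^-1.

Lemma off_ray_neq0 : w != 0.
Proof. by apply: contra w_off => /eqP ->. Qed.

Lemma off_ray_addC_neq0 x : 0 <= x -> w + x%:C != 0.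
Proof.
move=> x0; apply: contra w_off; rewrite addr_eq0 => /eqP ->.
by rewrite oppr_le0 ler0c.
Qed.

Lemma cone_divD x : 0 <= x -> cone w (w / (w + x%:C)).
Proof.
move=> x0; have x0C : 0 <= x%:C by rewrite ler0c.
rewrite invC_norm mulrCA; apply: coneM; first by rewrite invr_ge0 exprn_ge0.
have -> : (w + x%:C)^* = w^* + x%:C.
  by rewrite rmorphD; congr (_ + _); apply: conj_Creal; apply: ger0_real.
rewrite mulrDr.
apply: coneD; first by apply: cone_ge0; rewrite mul_conjC_ge0.
by rewrite mulrC; apply: coneM; [rewrite ler0c | apply: cone_id].
Qed.

Lemma cone_conj_invD x : 0 <= x -> cone w ((w + x%:C)^-1)^*.
Proof.
by move=> x0; apply/cone_conj_inv/coneD; [apply: cone_id | apply: cone_ge0; rewrite ler0c].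
Qed.

Lemma cone_conj_logderiv s : (forall x, x \in s -> 0 <= x) -> cone w (logderiv s w)^*.
Proof.
by move=> s_ge0; rewrite rmorph_sum; apply: cone_sum => x xs; apply/cone_conj_invD/s_ge0.
Qed.

Lemma logderiv_neq0 s : s != [::] -> (forall x, x \in s -> 0 <= x) -> logderiv s w != 0.
Proof.
move=> sn s_ge0; rewrite -conjC_eq0 rmorph_sum.
apply: (cone_sum_neq0 w_off) => // x xs; split; first exact/cone_conj_invD/s_ge0.
by rewrite conjC_eq0 invr_eq0 off_ray_addC_neq0 ?s_ge0.
Qed.

Lemma logderiv_combination_eq0 (sg th om : R) s t :
  0 <= sg -> 0 <= th -> 0 <= om -> s != [::] ->
  (forall x, x \in s -> 0 <= x) -> (forall x, x \in t -> 0 <= x) ->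
  sg%:C / logderiv s w + th%:C + om%:C * w + w * logderiv t w = 0 ->
  [/\ sg = 0, th = 0, om = 0 & t = [::]].
Proof.
move=> sg0 th0 om0 sn s_ge0 t_ge0 Q0.
have cA : cone w (sg%:C / logderiv s w).
  by apply: coneM; [rewrite ler0c | apply/cone_inv/cone_conj_logderiv].
have cB : cone w th%:C by apply: cone_ge0; rewrite ler0c.
have cC : cone w (om%:C * w) by apply: coneM; [rewrite ler0c | apply: cone_id].
have cD : cone w (w * logderiv t w).
  by rewrite mulr_sumr; apply: cone_sum => x xt; apply/cone_divD/t_ge0.
have [ABC0 D0] := cone_add_eq0 w_off (coneD (coneD cA cB) cC) cD Q0.
have [AB0 C0] := cone_add_eq0 w_off (coneD cA cB) cC ABC0.
have [A0 B0] := cone_add_eq0 w_off cA cB AB0.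
split.
- move/eqP: A0; rewrite mulf_eq0 invr_eq0 (negbTE (logderiv_neq0 sn s_ge0)) orbF.
  by rewrite fmorph_eq0 => /eqP.
- by move/eqP: B0; rewrite fmorph_eq0 => /eqP.
- move/eqP: C0; rewrite mulf_eq0 (negbTE off_ray_neq0) orbF.
  by rewrite fmorph_eq0 => /eqP.
- apply/eqP/negPn/negP => tn; move/eqP: D0; apply/negP.
  rewrite mulr_sumr; apply: (cone_sum_neq0 w_off) => // x xt.
  split; first exact/cone_divD/t_ge0.
  by rewrite mulf_neq0 ?off_ray_neq0 // invr_eq0 off_ray_addC_neq0 ?t_ge0.
Qed.

End OffTheRay.

Section ShiftedProducts.

Variable R : rcfType.
Implicit Types (s : seq R) (z : R[i]).

Definition prodXD s : {poly R[i]} := \prod_(x <- s) ('X + (x%:C)%:P).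

Lemma horner_prodXD s z : (prodXD s).[z] = \prod_(x <- s) (z + x%:C).
Proof. by rewrite horner_prod; apply: eq_bigr => x _; rewrite hornerD hornerX hornerC. Qed.

Lemma horner_prodXD_neq0 s z : ~~ (z <= 0) -> (forall x, x \in s -> 0 <= x) ->
  (prodXD s).[z] != 0.
Proof.
move=> z_off s_ge0; rewrite horner_prodXD prodf_seq_neq0.
by apply/allP => x xs; apply/off_ray_addC_neq0/s_ge0.
Qed.

Lemma horner_deriv_prodXD s z : (forall x, x \in s -> z + x%:C != 0) ->
  (prodXD s)^`().[z] = (prodXD s).[z] * logderiv s z.
Proof.
elim: s => [|y s IHs] s_neq0; first by rewrite /prodXD /logderiv !big_nil derivC horner0 mulr0.
have y_neq0 : z + y%:C != 0 by apply: s_neq0; rewrite mem_head.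
rewrite /prodXD /logderiv !big_cons derivM derivD derivX derivC addr0 mul1r.
rewrite hornerD !hornerM -/(prodXD s) IHs => [|x xs]; last first.
  by apply: s_neq0; rewrite inE xs orbT.
by rewrite hornerD hornerX hornerC /logderiv; field.
Qed.

Lemma root_deriv_prodXD s z : s != [::] -> (forall x, x \in s -> 0 <= x) ->
  root (prodXD s)^`() z -> z <= 0.
Proof.
move=> sn s_ge0; apply: contraTT => z_off.
rewrite /root horner_deriv_prodXD => [|x xs]; last by apply/off_ray_addC_neq0/s_ge0.
by rewrite mulf_neq0 ?horner_prodXD_neq0 ?logderiv_neq0.
Qed.

End ShiftedProducts.

Lemma nonpos_oppReC (R : rcfType) (z : R[i]) : z <= 0 -> (- complex.Re z)%:C = - z.
Proof. by case: z => a b; rewrite lecE => /andP[/eqP /= <- _]; rewrite complexr0 rmorphN. Qed.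

Section PplusStability.

Variable R : realType.
Implicit Types (s : seq R) (p f : {poly R[i]}).

Lemma Pplus_roots_nonpos p : p != 0 -> (forall z, root p z -> z <= 0) -> Pplus p.
Proof.
move=> p_neq0 roots_le0; have [r Ep] := closed_field_poly_normal p.
have r_le0 z : z \in r -> z <= 0.
  by move=> zr; apply: roots_le0; rewrite Ep rootZ ?lead_coef_eq0 // root_prod_XsubC.
exists (lead_coef p), [seq - complex.Re z | z <- r]; split.
  by move=> _ /mapP[z zr ->]; rewrite -ler0c nonpos_oppReC ?oppr_ge0 ?r_le0.
rewrite {1}Ep big_map; congr (_ *: _); apply: eq_big_seq => z zr.
by rewrite nonpos_oppReC ?r_le0 // polyCN.
Qed.

Lemma PplusZ c p : Pplus p -> Pplus (c *: p).
Proof. by move=> [c' [s [s_ge0 ->]]]; exists (c * c'), s; rewrite scalerA. Qed.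

Lemma sigmaDeltaZ (sigma theta omega : R) c f :
  sigmaDelta sigma theta omega (c *: f) = c *: sigmaDelta sigma theta omega f.
Proof.
rewrite /sigmaDelta /Delta derivZ derivnZ !scalerDr scalerA mulrC -scalerA.
by rewrite -!scalerAr.
Qed.

Lemma horner_sigmaDelta (sigma theta omega : R) f w L M : L != 0 ->
  f^`().[w] = f.[w] * L -> f^`(2).[w] = f^`().[w] * M ->
  (sigmaDelta sigma theta omega f).[w]
    = f^`().[w] * (sigma%:C / L + theta%:C + omega%:C * w + w * M).
Proof.
move=> L_neq0 f'_w f''_w; have f_w : f.[w] = f^`().[w] / L by rewrite f'_w mulfK.
rewrite /sigmaDelta /Delta !(hornerD, hornerZ, hornerM, hornerX, hornerC) f''_w f_w.
by field.
Qed.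

Lemma Pplus_sigmaDelta_prodXD (sigma theta omega : R) s :
  0 <= sigma -> 0 <= theta -> 0 <= omega -> (forall x, x \in s -> 0 <= x) ->
  Pplus (sigmaDelta sigma theta omega (prodXD s)).
Proof.
move=> sg0 th0 om0 s_ge0; set F := prodXD s; set g := sigmaDelta _ _ _ F.
have [->|g_neq0] := eqVneq g 0; first by exists 0, [::]; rewrite scale0r.
have [s0|sn] := eqVneq s [::].
  exists sigma%:C, [::]; split => //.
  by rewrite /g /sigmaDelta /Delta /F s0 /prodXD big_nil -polyC1 derivC derivnC !mulr0 !addr0.
have F'_neq0 : F^`() != 0.
  apply/eqP => F'0; have := root_deriv_prodXD sn s_ge0 (z := 1).
  by rewrite -/F F'0 root0 ler10 => /(_ isT).
have [d [t [t_ge0 EF']]] := Pplus_roots_nonpos F'_neq0 (fun z => root_deriv_prodXD sn s_ge0).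
have F''E : F^`(2) = d *: (prodXD t)^`() by rewrite derivnS derivn1 EF' derivZ.
apply: (Pplus_roots_nonpos g_neq0) => w; apply: contraTT => w_off.
have shift_neq0 r : (forall x, x \in r -> 0 <= x) -> forall x, x \in r -> w + x%:C != 0.
  by move=> r_ge0 x xr; apply/off_ray_addC_neq0/r_ge0.
have F'_w : F^`().[w] = F.[w] * logderiv s w by apply/horner_deriv_prodXD/shift_neq0.
have F''_w : F^`(2).[w] = F^`().[w] * logderiv t w.
  by rewrite F''E EF' !hornerZ horner_deriv_prodXD ?mulrA //; apply: shift_neq0.
rewrite /root /g (horner_sigmaDelta _ _ _ (logderiv_neq0 w_off sn s_ge0) F'_w F''_w).
rewrite mulf_neq0 // ?F'_w ?mulf_neq0 ?horner_prodXD_neq0 ?logderiv_neq0 //.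
apply/eqP => /(logderiv_combination_eq0 w_off sg0 th0 om0 sn s_ge0 t_ge0) [sg_0 th_0 om_0 t_0].
move: g_neq0; rewrite /g /sigmaDelta /Delta F''E t_0 /prodXD big_nil -polyC1 derivC.
by rewrite sg_0 th_0 om_0 rmorph0 !(scale0r, scaler0, polyC0, mul0r, mulr0, add0r) eqxx.
Qed.

End PplusStability.

Theorem lemma3 (R : realType) (sigma theta omega : R) :
  0 <= sigma -> 0 <= theta -> 0 <= omega ->
  forall f : {poly R[i]}, Pplus f -> Pplus (sigmaDelta sigma theta omega f).
Proof.
move=> sg0 th0 om0 f [c [s [s_ge0 ->]]].
by rewrite sigmaDeltaZ; apply/PplusZ/Pplus_sigmaDelta_prodXD.
Qed.
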